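(* Let $p$ be a prime and let $G$ be a finite group with $G=PN$, where $1<P\in\mathrm{Syl}_p(G)$, $N\trianglelefteq G$, $\gcd(|P|,|N|)=1$ and $C_N(P)=1$. Then $G$ has a redundant Sylow $p$-subgroup if and only if $C_N(x)>1$ for every $p$-element $x\in G$.
   Context: For a finite group $G$ and a prime $p$, $G_p$ denotes the set of $p$-elements of $G$ and $\mathrm{Syl}_p(G)$ the set of Sylow $p$-subgroups of $G$. $G$ is said to have a redundant Sylow $p$-subgroup if $G_p$ is contained in the union of the members of some proper subset of $\mathrm{Syl}_p(G)$. *)

From mathcomp Require Import all_boot all_fingroup all_solvable.
Set Implicit Arguments. Unset Strict Implicit. Unset Printing Implicit Defensive.
Local Open Scope group_scope.

Definition p_elts (gT : finGroupType) (p : nat) (G : {set gT}) : {set gT} :=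
  [set x in G | p.-elt x].

Definition has_redundant_sylow (gT : finGroupType) (p : nat) (G : {set gT}) : Prop :=
  exists S : {set {group gT}},
    S \proper 'Syl_p(G) /\ p_elts p G \subset \bigcup_(Q in S) Q.

From mathcomp Require Import all_boot all_fingroup all_solvable.
Set Implicit Arguments. Unset Strict Implicit. Unset Printing Implicit Defensive.
Local Open Scope group_scope.

(* Since G = PN, the Sylow p-subgroups are the conjugates P^n with n in N, and
   each of them meets N trivially.  If y lies in two distinct Sylow subgroups Q
   and Q^n, then y and y^(n^-1) both lie in Q, so [y, n^-1] lies in Q :&: N = 1
   and n^-1 is a nontrivial element of C_N(y); as C_N(x) and C_N(x^g) are
   conjugate, a redundant Sylow subgroup forces C_N(x) > 1 for every p-element
   x.  Conversely [N_N(P), P] <= N :&: P = 1 gives N_N(P) = C_N(P) = 1, so for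
   x in P and 1 != h in C_N(x) the Sylow subgroup P^h differs from P but still
   contains x = x^h: then P is redundant. *)

Lemma TI_conj_commute (gT : finGroupType) (Q N : {group gT}) y h :
  Q :&: N = 1 -> y \in 'N(N) -> y \in Q -> h \in N -> y ^ h \in Q ->
  commute y h.
Proof.
move=> tiQN nNy Qy Nh Qyh; apply/commgP.
have : [~ y, h] \in Q :&: N.
  rewrite inE; apply/andP; split; first by rewrite commgEl groupM ?groupV.
  by rewrite commgEr groupM // memJ_norm // groupV.
by rewrite tiQN inE.
Qed.

Lemma TI_norm_cent (gT : finGroupType) (Q N : {group gT}) :
  Q :&: N = 1 -> Q \subset 'N(N) -> 'N_N(Q) \subset 'C(Q).
Proof.
move=> tiQN nNQ; apply/commG1P/trivgP; rewrite -tiQN [Q :&: N]setIC.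
by apply: commg_subI; rewrite // subsetI subxx.
Qed.

Lemma cent1J_norm (gT : finGroupType) (N : {group gT}) x g :
  g \in 'N(N) -> 'C_N[x ^ g] = 'C_N[x] :^ g.
Proof. by move=> nNg; rewrite cent1J conjIg (normP nNg). Qed.

Section SylowComplement.

Variables (gT : finGroupType) (p : nat) (G P N : {group gT}).
Hypotheses (sylP : p.-Sylow(G) P) (nsNG : N <| G) (defG : G :=: P * N).
Hypothesis tiPN : P :&: N = 1.

Lemma Sylow_conjN (Q : {group gT}) :
  p.-Sylow(G) Q -> exists2 n, n \in N & Q :=: P :^ n.
Proof.
move=> sylQ; have [g] := Sylow_trans sylP sylQ.
rewrite defG => /mulsgP[a n Pa Nn ->] ->.
by exists n; rewrite // conjsgM conjGid.
Qed.

Lemma Sylow_TIN (Q : {group gT}) : p.-Sylow(G) Q -> Q :&: N = 1.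
Proof.
by case/Sylow_conjN=> n Nn ->; rewrite -(conjGid Nn) -conjIg tiPN conjs1g.
Qed.

Lemma Sylow_transN (Q R : {group gT}) :
  p.-Sylow(G) Q -> p.-Sylow(G) R -> exists2 n, n \in N & R :=: Q :^ n.
Proof.
move=> /Sylow_conjN[a Na ->] /Sylow_conjN[b Nb ->].
by exists (a^-1 * b); rewrite ?groupM ?groupV // -conjsgM mulKVg.
Qed.

Lemma Sylow_meet_cent1N (Q R : {group gT}) y :
  p.-Sylow(G) Q -> p.-Sylow(G) R -> Q != R -> y \in Q -> y \in R ->
  'C_N[y] != 1.
Proof.
move=> sylQ sylR neQR Qy Ry; have [n Nn defR] := Sylow_transN sylQ sylR.
apply/trivgPn; exists n^-1; last first.
  rewrite eq_invg1; apply: contraNneq neQR => n1.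
  by apply/eqP/group_inj; rewrite defR n1 conjsg1.
have nNy : y \in 'N(N).
  by apply: subsetP (normal_norm nsNG) _ (subsetP (pHall_sub sylQ) y Qy).
have Qyn : y ^ n^-1 \in Q by rewrite -mem_conjg -defR.
rewrite inE groupV Nn; apply/cent1P/commute_sym.
by apply: (TI_conj_commute (Sylow_TIN sylQ) nNy Qy); rewrite ?groupV.
Qed.

Lemma redundant_Sylow_cent1N x :
  has_redundant_sylow p G -> x \in G -> p.-elt x -> 'C_N[x] != 1.
Proof.
case=> S [ltS covS] Gx px; have [sS [Q sylQ notSQ]] := properP ltS.
rewrite inE in sylQ; have sxG : <[x]> \subset G by rewrite cycle_subG.
have [g Gg sxQg] := Sylow_subJ sylQ sxG px.
have Qy : x ^ g^-1 \in Q by rewrite -mem_conjg (subsetP sxQg) ?cycle_id.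
have /(subsetP covS)/bigcupP[R SR Ry] : x ^ g^-1 \in p_elts p G.
  by rewrite inE groupJ ?groupV // p_eltJ.
have sylR : p.-Sylow(G) R by have := subsetP sS R SR; rewrite inE.
have nNg : g \in 'N(N) by apply: subsetP (normal_norm nsNG) g Gg.
rewrite -[x](conjgKV g) cent1J_norm // conjsg_eq1.
by apply: Sylow_meet_cent1N sylQ sylR _ Qy Ry; apply: contraNneq notSQ => ->.
Qed.

Lemma cent1N_redundant_Sylow :
  'C_N(P) = 1 -> (forall x, x \in G -> p.-elt x -> 'C_N[x] != 1) ->
  has_redundant_sylow p G.
Proof.
move=> regP ntCx; exists ('Syl_p(G) :\ P); split.
  by apply: properD1; rewrite inE.
have nPN : P \subset 'N(N).
  exact: subset_trans (pHall_sub sylP) (normal_norm nsNG).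
have regNP : 'N_N(P) = 1.
  by apply/trivgP; rewrite -regP subsetI subsetIl TI_norm_cent.
apply/subsetP=> x /setIdP[Gx px].
have sxG : <[x]> \subset G by rewrite cycle_subG.
have [Q sylQ] := Sylow_superset sxG px; rewrite cycle_subG => Qx.
have [defQ | neQP] := eqVneq Q P; last first.
  by apply/bigcupP; exists Q; rewrite // !inE neQP.
have [h /setIP[Nh cxh] nth] := trivgPn _ (ntCx x Gx px).
have Gh : h \in G by apply: subsetP (normal_sub nsNG) h Nh.
apply/bigcupP; exists (P :^ h)%G; last first.
  have xh : x ^ h = x by apply/conjg_fixP/commgP/commute_sym/cent1P.
  by rewrite -xh memJ_conjg -defQ.
rewrite !inE pHallJ // sylP andbT; apply: contra nth => /eqP/(congr1 val)/= nPh.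
have : h \in 'N_N(P) by rewrite inE Nh; apply/normP.
by rewrite regNP inE.
Qed.

End SylowComplement.

Theorem corollary3p2 (gT : finGroupType) (p : nat) (G P N : {group gT}) :
  prime p ->
  P \in 'Syl_p(G) -> P :!=: 1 ->
  N <| G -> G :=: P * N ->
  coprime #|P| #|N| ->
  'C_N(P) :=: 1 ->
  has_redundant_sylow p G <-> (forall x, x \in G -> p.-elt x -> 'C_N[x] :!=: 1).
Proof.
move=> _ sylP _ nsNG defG coPN regP; rewrite inE in sylP.
have tiPN : P :&: N = 1 by apply: coprime_TIg.
split=> [redG x | ntCx].
  exact: redundant_Sylow_cent1N sylP nsNG defG tiPN x redG.
exact: cent1N_redundant_Sylow sylP nsNG tiPN regP ntCx.
Qed.
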